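(* Let $m\equiv1\pmod 8$ be a square-free integer all of whose prime factors are $\equiv\pm1\pmod 8$. Then $m\equiv1\pmod{16}$ if and only if $\left(\frac{2+\sqrt2}{|m|}\right)=1$.
   Context: For each prime $p\equiv\pm1\pmod 8$, $2$ is a square modulo $p$; for $p\mid m$ choose $s_p$ with $s_p^2\equiv2\pmod p$. Then $\left(\frac{2+\sqrt2}{|m|}\right):=\prod_{p\mid m}\left(\frac{2+s_p}{p}\right)$ (product of Legendre symbols), which is independent of the choices of $s_p$ since $(2+s_p)(2-s_p)\equiv 2$ is a nonzero square mod $p$; equivalently it is $\prod_{p\mid m}(2+\sqrt2,|m|)_p$ with $\sqrt2\in\mathbb{Q}_p$ and $(\cdot,\cdot)_p$ the Hilbert symbol. *)

From mathcomp Require Import all_boot all_order all_algebra.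
Set Implicit Arguments. Unset Strict Implicit. Unset Printing Implicit Defensive.
Import Order.TTheory GRing.Theory Num.Theory.
Local Open Scope ring_scope.

Definition legendre (p : nat) (a : int) : int :=
  if (p%:Z %| a)%Z then 0
  else if [exists x : 'I_p, (p%:Z %| (x%:Z) ^+ 2 - a)%Z] then 1 else -1.

Definition squarefree (n : nat) : Prop :=
  forall p : nat, prime p -> ~~ (p * p %| n)%N.

(* ((2 + sqrt 2) / |m|) := prod_{p | m} ((2 + s_p) / p), given a choice
   s p of a square root of 2 modulo each prime p dividing m. *)
Definition sym2sqrt2 (m : int) (s : nat -> int) : int :=
  \prod_(p <- primes `|m|%N) legendre p (2 + s p).

(* By Euler's criterion, ((2 + s_p) / p) is the sign of (2 + s_p)^k in F_p, where
   p = 2k + 1.  A root z of X^2 - s_p X + 1 in an extension of F_p is a primitive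
   8th root of unity with (1 + z)^2 = z (2 + s_p), so the Frobenius identity
   (1 + z)^p = 1 + z^p reads z^k (2 + s_p)^k (1 + z) = 1 + z^p; reducing the powers
   of z with z^4 = -1 gives (2 + s_p)^k = 1 exactly when p = +-1 (mod 16).  This
   sign of p mod 16 is multiplicative on integers = +-1 (mod 8), and the square-free
   |m| is the product of its primes, so the symbol is 1 iff |m| = +-1 (mod 16),
   that is iff m = 1 (mod 16) since m = 1 (mod 8). *)

From mathcomp Require Import all_boot all_order all_algebra all_field.
From mathcomp Require Import fingroup cyclic.
From mathcomp Require Import zify ring.
Set Implicit Arguments. Unset Strict Implicit. Unset Printing Implicit Defensive.
Import Order.TTheory GRing.Theory Num.Theory.
Local Open Scope ring_scope.

Section FiniteFieldSquares.

Variable F : finFieldType.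
Hypothesis oddF : odd #|F|.

Let k := #|F|./2.

Lemma expf_card_pred (x : F) : x != 0 -> x ^+ #|F|.-1 = 1.
Proof.
move=> x0; apply: (mulfI x0); rewrite -exprS prednK ?mulr1 ?expf_card //.
by apply/card_gt0P; exists x.
Qed.

Lemma expf_half_card_pm1 (y : F) : y != 0 -> y ^+ k = 1 \/ y ^+ k = -1.
Proof.
move=> y0; have : (y ^+ k) ^+ 2 == 1.
  by rewrite -exprM mulnC mul2n (odd_halfK oddF) expf_card_pred.
by rewrite sqrf_eq1 => /orP[/eqP|/eqP]; [left|right].
Qed.

Lemma euler_criterion (y : F) : y != 0 -> (exists x, x ^+ 2 = y) <-> y ^+ k = 1.
Proof.
move=> y0; split => [[x xy]|yk].
  have x0 : x != 0 by apply: contraNneq y0 => x0; rewrite -xy x0 expr0n.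
  by rewrite -xy -exprM mul2n (odd_halfK oddF) expf_card_pred.
(* The units form a cyclic group <g> of order 2k; y = g^i with y^k = 1 gives 2k | ik, so i is even. *)
have /cyclicP[g defG] := field_unit_group_cyclic [set: {unit F}]%G.
have ordg : #[g]%g = k.*2.
  by rewrite /order -defG /= card_finField_unit (odd_halfK oddF).
have yU : y \is a GRing.unit by rewrite unitfE.
have /cycleP[i yi] : FinRing.Unit yU \in <[g]>%g by rewrite -defG inE.
have /dvdnP[j ij] : (2 %| i)%N.
  have k0 : (0 < k)%N by rewrite -double_gt0 -ordg order_gt0.
  rewrite -(dvdn_pmul2r k0) mul2n -ordg order_dvdn; apply/eqP/val_inj.
  by rewrite FinRing.val_unitX exprM -FinRing.val_unitX -yi /= yk.
by exists (val g ^+ j); rewrite -exprM -ij -FinRing.val_unitX -yi.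
Qed.

End FiniteFieldSquares.

Section Legendre.

Variable p : nat.
Hypothesis p_pr : prime p.

Lemma intr_Fp_inj (u v : int) : (`|u - v| < p)%N -> u%:~R = v%:~R :> 'F_p -> u = v.
Proof.
move=> uv /eqP; rewrite -subr_eq0 -rmorphB -(dvdz_pcharf (pchar_Fp p_pr)) /dvdz /= => pd.
apply/eqP; rewrite -subr_eq0 -absz_eq0; apply/eqP.
by case: (posnP `|u - v|%N) => // /dvdn_leq /(_ pd); lia.
Qed.

Lemma legendre_Fp (a : int) : legendre p a =
  if (a%:~R : 'F_p) == 0 then 0 else if [exists x : 'F_p, x ^+ 2 == a%:~R] then 1 else -1.
Proof.
have dvdp x : (p%:Z %| x)%Z = (x%:~R == 0 :> 'F_p) by rewrite -(dvdz_pcharf (pchar_Fp p_pr)).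
rewrite /legendre dvdp; case: (_ == 0) => //; congr (if _ then _ else _).
apply/existsP/existsP => [[x]|[x xa]].
  by rewrite dvdp rmorphB rmorphXn /= subr_eq0 => /eqP xa; exists x%:R; rewrite xa.
have xp : (x < p)%N by rewrite -[X in (_ < X)%N](Fp_cast p_pr).
by exists (Ordinal xp); rewrite dvdp rmorphB rmorphXn /= subr_eq0 -pmulrn natr_Zp.
Qed.

Hypothesis p_odd : odd p.

Lemma legendre_euler (a : int) : (legendre p a)%:~R = (a%:~R : 'F_p) ^+ p./2.
Proof.
have oddF : odd #|'F_p| by rewrite card_Fp.
have := euler_criterion oddF; rewrite card_Fp // legendre_Fp.
have [-> _ |a0 /(_ _ a0) crit] := eqVneq (a%:~R : 'F_p) 0.
  have := prime_gt1 p_pr; rewrite expr0n; case: eqP => //; lia.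
case: existsP => [[x /eqP xa]|nsq]; first by rewrite crit.1 //; exists x.
have := expf_half_card_pm1 oddF a0; rewrite card_Fp // => -[ak|-> //].
by case: nsq; have [x xa] := crit.2 ak; exists x; rewrite xa.
Qed.

End Legendre.

Lemma finField_ext_root (F : finFieldType) (q : {poly F}) :
  (1 < size q)%N -> exists (L : fieldExtType F) (z : L), root (map_poly (in_alg L) q) z.
Proof.
move=> q_gt1; have q0 : q != 0 by rewrite -size_poly_gt0 ltnW.
have [L [rs qrs _]] := FinSplittingFieldFor q0.
exists L; case: rs qrs => [|z rs] qrs.
  by move: q_gt1; rewrite -(size_map_poly (in_alg L)) (eqp_size qrs) big_nil size_poly1.
by exists z; rewrite (eqp_root qrs) root_prod_XsubC mem_head.
Qed.

Definition pm1_mod8 (n : nat) : bool := (n %% 8 == 1)%N || (n %% 8 == 7)%N.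

Definition sign_mod16 (n : nat) : int :=
  if (n %% 16 == 1)%N || (n %% 16 == 15)%N then 1 else -1.

Lemma pm1_mod8M (a b : nat) : pm1_mod8 a -> pm1_mod8 b -> pm1_mod8 (a * b).
Proof.
rewrite /pm1_mod8 -modnMm.
by case/orP=> /eqP-> /orP[] /eqP->.
Qed.

Lemma sign_mod16M (a b : nat) : pm1_mod8 a -> pm1_mod8 b ->
  sign_mod16 (a * b) = sign_mod16 a * sign_mod16 b.
Proof.
have mod16 n : pm1_mod8 n ->
    (n %% 16 = 1 \/ n %% 16 = 7 \/ n %% 16 = 9 \/ n %% 16 = 15)%N.
  by rewrite /pm1_mod8; lia.
rewrite /sign_mod16 -modnMm => /mod16 + /mod16.
by case=> [|[|[|]]] -> [|[|[|]]] ->.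
Qed.

Lemma prod_sign_mod16 (r : seq nat) : all pm1_mod8 r ->
  \prod_(p <- r) sign_mod16 p = sign_mod16 (\prod_(p <- r) p)%N.
Proof.
elim: r => [|p r IHr] /=; first by rewrite !big_nil.
case/andP=> p8 r8; rewrite !big_cons IHr // sign_mod16M //.
by rewrite big_seq; apply: (big_ind pm1_mod8) => //; [exact: pm1_mod8M | exact/allP].
Qed.

Lemma squarefree_prod_primes (n : nat) : (0 < n)%N -> squarefree n ->
  n = (\prod_(p <- primes n) p)%N.
Proof.
move=> n0 sqf; rewrite {1}(prod_prime_decomp n0) prime_decompE big_map /=.
apply: eq_big_seq => p; rewrite mem_primes => /and3P[p_pr _ pn].
have : (0 < logn p n)%N by rewrite logn_gt0 mem_primes p_pr n0 pn.
suff : (logn p n < 2)%N by case: (logn p n) => [|[|]].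
by rewrite ltnNge -pfactor_dvdn // -mulnn; exact: sqf.
Qed.

Lemma sign_mod16_absz (m : int) : (m %% 8)%Z = 1 ->
  (m %% 16)%Z = 1 <-> sign_mod16 `|m| = 1.
Proof. by rewrite /sign_mod16; case: ifP; lia. Qed.

Section EighthRootOfUnity.

Variables (L : fieldType) (a z : L).
Hypotheses (a_sqr : a ^+ 2 = 2) (z_root : (z - a) * z + 1 = 0).

Lemma zeta_sqr : z ^+ 2 = a * z - 1.
Proof. by rewrite -[RHS]addr0 -z_root; ring. Qed.

Lemma zeta_exp4 : z ^+ 4 = -1.
Proof. by rewrite (exprM z 2 2) zeta_sqr sqrrB exprMn a_sqr zeta_sqr; ring. Qed.

Lemma zeta_exp8 : z ^+ 8 = 1.
Proof. by rewrite (exprM z 4 2) zeta_exp4 sqrrN expr1n. Qed.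

Lemma zeta_neq0 : z != 0.
Proof. by apply: contra_eqN zeta_exp4 => /eqP->; rewrite expr0n eq_sym oppr_eq0 oner_eq0. Qed.

Lemma one_add_zeta_sqr : (1 + z) ^+ 2 = z * (2 + a).
Proof. by rewrite sqrrD zeta_sqr; ring. Qed.

Variable p : nat.
Hypotheses (pcharLp : p \in [pchar L]) (p_odd : odd p).

Lemma one_add_zeta_neq0 : 1 + z != 0.
Proof.
apply: contraTneq p_odd => /eqP; rewrite addrC addr_eq0 => /eqP z_1.
have : (2%:R : L) == 0.
  by move: zeta_exp4; rewrite z_1 -signr_odd expr0 => /eqP; rewrite -subr_eq0 opprK.
rewrite -(dvdn_pcharf pcharLp) => /(dvdn_leq (ltn0Sn 1)).
by have := pcharf_prime pcharLp; case: p => [|[|[]]].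
Qed.

Lemma zeta_frobenius : z ^+ p./2 * (2 + a) ^+ p./2 * (1 + z) = 1 + z ^+ p.
Proof.
have p_half : (p./2).*2.+1 = p by rewrite -[RHS]odd_double_half p_odd.
rewrite -exprMn -one_add_zeta_sqr -exprM -exprSr mul2n p_half exprDn_pchar ?expr1n //.
by rewrite pnatE ?(pcharf_prime pcharLp).
Qed.

Lemma one_add_zeta_exp :
  pm1_mod8 p -> 1 + z ^+ p = (sign_mod16 p)%:~R * (z ^+ p./2 * (1 + z)).
Proof.
have eq_mod_zeta4 (u v q : L) : u - v = (z ^+ 4 + 1) * q -> u = v.
  by move=> uvq; apply/eqP; rewrite -subr_eq0 uvq zeta_exp4 addNr mul0r.
rewrite -(expr_mod p zeta_exp8) -(expr_mod p./2 zeta_exp8) /sign_mod16.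
move: (odd_double_half p); rewrite /pm1_mod8 p_odd add1n; move: (p./2) => k <- p8.
(* p mod 16 fixes both p and p./2 mod 8. *)
have : ((k %% 8 = 0 /\ k.*2.+1 %% 8 = 1 /\ k.*2.+1 %% 16 = 1) \/
        (k %% 8 = 3 /\ k.*2.+1 %% 8 = 7 /\ k.*2.+1 %% 16 = 7) \/
        (k %% 8 = 4 /\ k.*2.+1 %% 8 = 1 /\ k.*2.+1 %% 16 = 9) \/
        (k %% 8 = 7 /\ k.*2.+1 %% 8 = 7 /\ k.*2.+1 %% 16 = 15))%N.
  by move: p8; lia.
move=> [|[|[|]]] [-> [-> ->]] /=.
- by apply: (eq_mod_zeta4 _ _ 0); ring.
- by apply: (eq_mod_zeta4 _ _ (1 + z ^+ 3)); ring.
- by apply: (eq_mod_zeta4 _ _ (1 + z)); ring.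
- by apply: (eq_mod_zeta4 _ _ (1 - z ^+ 4)); ring.
Qed.

Lemma two_add_sqrt2_exp_half :
  pm1_mod8 p -> (2 + a) ^+ p./2 = (sign_mod16 p)%:~R.
Proof.
move=> p8; have nz : z ^+ p./2 * (1 + z) != 0.
  by rewrite mulf_neq0 ?expf_neq0 ?zeta_neq0 ?one_add_zeta_neq0.
by apply: (mulIf nz); rewrite -one_add_zeta_exp // -zeta_frobenius; ring.
Qed.

End EighthRootOfUnity.

Lemma legendre_two_add_sqrt2 (p : nat) (s : int) : prime p -> pm1_mod8 p ->
  (p%:Z %| s ^+ 2 - 2)%Z -> legendre p (2 + s) = sign_mod16 p.
Proof.
move=> p_pr p8 s_sqrt2.
have p_odd : odd p.
  have : (p %% 2 = 1)%N by move: p8; rewrite /pm1_mod8; lia.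
  by rewrite modn2; case: odd.
pose sigma : 'F_p := s%:~R.
have sigma_sqr : sigma ^+ 2 = 2.
  by apply/eqP; rewrite -subr_eq0; move: s_sqrt2; rewrite (dvdz_pcharf (pchar_Fp p_pr)) rmorphB rmorphXn.
pose q : {poly 'F_p} := ('X - sigma%:P) * 'X + 1%:P.
have q_size : size q = 3%N by rewrite size_MXaddC oner_eq0 andbF size_XsubC.
have [L [z]] : exists (L : fieldExtType 'F_p) (z : L), root (map_poly (in_alg L) q) z.
  by apply: finField_ext_root; rewrite q_size.
rewrite /root !(rmorphD, rmorphM, rmorphB, rmorphN) /= map_polyX !map_polyC !hornerE /=.
rewrite scale1r -in_algE; set a := in_alg L sigma => /eqP z_root.
have a_sqr : a ^+ 2 = 2 by rewrite -rmorphXn sigma_sqr rmorph_nat.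
have pcharLp : p \in [pchar L] by rewrite pchar_lalg pchar_Fp.
have := two_add_sqrt2_exp_half a_sqr z_root pcharLp p_odd p8.
rewrite -[2 : L](rmorph_nat (in_alg L)) -rmorphD -rmorphXn -(rmorph_int (in_alg L)).
move/fmorph_inj => euler.
apply: (intr_Fp_inj p_pr); last by rewrite legendre_euler // rmorphD euler.
have : (2 < p)%N by move: (prime_gt1 p_pr) p8; rewrite /pm1_mod8; lia.
by rewrite /legendre /sign_mod16; (repeat case: ifP => _); lia.
Qed.

Theorem lemma5p4 (m : int) (s : nat -> int) :
  (m %% 8)%Z = 1 ->
  squarefree `|m|%N ->
  (forall p : nat, prime p -> (p %| `|m|)%N ->
     (p %% 8 = 1)%N \/ (p %% 8 = 7)%N) ->
  (forall p : nat, prime p -> (p %| `|m|)%N ->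
     (p%:Z %| s p ^+ 2 - 2)%Z) ->
  ((m %% 16)%Z = 1 <-> sym2sqrt2 m s = 1).
Proof.
move=> m_mod8 m_sqf m_pm1 s_sqrt2.
have m_gt0 : (0 < `|m|)%N by lia.
have primes_pm1 p : p \in primes `|m| -> pm1_mod8 p.
  rewrite mem_primes => /and3P[p_pr _ pm].
  by rewrite /pm1_mod8; case: (m_pm1 p p_pr pm) => ->.
have -> : sym2sqrt2 m s = \prod_(p <- primes `|m|) sign_mod16 p.
  apply: eq_big_seq => p p_m; move: (p_m); rewrite mem_primes => /and3P[p_pr _ pm].
  exact: legendre_two_add_sqrt2 p_pr (primes_pm1 p p_m) (s_sqrt2 p p_pr pm).
rewrite prod_sign_mod16; last exact/allP.
by rewrite -squarefree_prod_primes //; exact: sign_mod16_absz.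
Qed.
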